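(* Let $n\ge1$ and $1\le k\le n$ be integers, let $d$ be a positive divisor of $n$, and let $\omega$ be a primitive $d$-th root of unity. Let $$f_{n,k}(q)=\frac{1}{[2n-k]_q}\begin{bmatrix} n\\ k-1\end{bmatrix}_q\begin{bmatrix} 3n-2k-1\\ n-k\end{bmatrix}_q$$ and for integers $N,K$ let $f_{N,K}=\frac{1}{2N-K}\binom{N}{K-1}\binom{3N-2K-1}{N-K}$. Then: (1) If $d=1$, then $f_{n,k}(\omega)=f_{n,k}$. (2) If $d\ge2$ and $d\mid k$, then with $n'=n/d$, $k'=k/d$ we have $f_{n,k}(\omega)=(n'-k'+1)f_{n',k'}$. (3) If $d=2$ and $k$ is odd, then with $n'=n/2$, $k'=(k+1)/2$ we have $f_{n,k}(\omega)=\binom{n'}{k'-1}\binom{3n'-2k'}{n'-k'}$. (4) In all other cases $f_{n,k}(\omega)=0$.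
   Context: $[m]_q=1+q+\dots+q^{m-1}=\frac{1-q^m}{1-q}$, $[m]_q!=[m]_q[m-1]_q\cdots[1]_q$, $\begin{bmatrix} m\\ j\end{bmatrix}_q=\frac{[m]_q!}{[j]_q![m-j]_q!}$. The value $f_{n,k}(\omega)$ is the value at $q=\omega$ of the rational function $f_{n,k}(q)$ after cancellation (it has no pole at $\omega$), i.e. its limit as $q\to\omega$. *)

From HB Require Import structures.
From mathcomp Require Import all_boot all_order all_algebra all_field.
Set Implicit Arguments. Unset Strict Implicit. Unset Printing Implicit Defensive.
Import Order.TTheory GRing.Theory Num.Theory.
Local Open Scope ring_scope.

Notation qpoly := {poly algC}.
Notation qrat := {fraction {poly algC}}.
Notation "x %:Fr" := (@FracField.tofrac _ x) (at level 2, format "x %:Fr").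

Definition qint (m : nat) : qpoly := \sum_(i < m) 'X^i.
Definition qfact (m : nat) : qpoly := \prod_(i < m) qint i.+1.
Definition qbinom (m j : nat) : qrat :=
  if (j <= m)%N then (qfact m)%:Fr / ((qfact j)%:Fr * (qfact (m - j))%:Fr)
  else 0.

Definition fq (n k : nat) : qrat :=
  ((qint (2 * n - k))%:Fr)^-1 * qbinom n (k - 1) * qbinom (3 * n - 2 * k - 1) (n - k).

Definition fN (N K : nat) : algC :=
  (((2 * N - K)%N)%:R)^-1 * ('C(N, K - 1))%:R * ('C(3 * N - 2 * K - 1, N - K))%:R.

(* "the value at q = x of the rational function f (after cancellation) is v":
   f = P/Q with polynomials P, Q, Q(x) <> 0 and v = P(x)/Q(x). *)
Definition value_at (f : qrat) (x v : algC) : Prop :=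
  exists P Q : qpoly, Q.[x] != 0 /\ f = P%:Fr / Q%:Fr /\ v = P.[x] / Q.[x].

From HB Require Import structures.
From mathcomp Require Import all_boot all_order all_algebra all_field.
From mathcomp Require Import ring zify.
Set Implicit Arguments. Unset Strict Implicit. Unset Printing Implicit Defensive.
Import Order.TTheory GRing.Theory Num.Theory.
Local Open Scope ring_scope.

(* Since [m]_q = (1 - q^m) / (1 - q), f_{n,k}(q) is a quotient of two products of factors
   1 - q^m.  At a primitive d-th root of unity w such a factor vanishes iff d | m, and
   grouping (q;q)_m = (1 - q)...(1 - q^m) into blocks of d consecutive factors shows
   (q;q)_(dq + r) = C^q B with C = (w;w)_(d-1) (1 - q^d) and B(w) = q! (w;w)_r.  Writing
   numerator and denominator as powers of C times polynomials that do not vanish at w,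
   the value at w is the quotient of the reduced values when the powers agree (d | k,
   and d = 2 with k odd) and 0 when the numerator has the higher power (all other
   cases); the reduced values are products of factorials, which give the binomials. *)

Definition qfactor (m : nat) : {poly algC} := 1 - 'X^m.
Definition qpoch (m : nat) : {poly algC} := \prod_(i < m) qfactor i.+1.
Definition wpoch (w : algC) (r : nat) : algC := \prod_(i < r) (1 - w ^+ i.+1).

Lemma qfactor_neq0 m : (0 < m)%N -> qfactor m != 0.
Proof.
move=> m_gt0; apply: contraTneq isT => /(congr1 (horner^~ 0)).
by rewrite /qfactor !hornerE expr0n eqn0Ngt m_gt0 subr0 => /eqP; rewrite oner_eq0.
Qed.

Lemma qpoch_neq0 m : qpoch m != 0.
Proof. by apply/prodf_neq0 => i _; apply: qfactor_neq0. Qed.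

Lemma qpochD m r : qpoch (m + r) = qpoch m * \prod_(i < r) qfactor (m + i).+1.
Proof. by rewrite /qpoch big_split_ord. Qed.

Lemma qint_qfactor m : qint m * qfactor 1 = qfactor m.
Proof. by rewrite /qint /qfactor expr1 mulrC -opprB mulNr -subrX1 opprB. Qed.

Lemma qfact_qpoch m : qfact m * qfactor 1 ^+ m = qpoch m.
Proof.
elim: m => [|m IHm]; first by rewrite /qfact /qpoch !big_ord0 mul1r.
rewrite /qfact /qpoch !big_ord_recr /= -/(qfact m) -/(qpoch m) -IHm.
by rewrite exprS -(qint_qfactor m.+1); ring.
Qed.

Lemma tofrac_qint m : (qint m)%:Fr = (qfactor m)%:Fr / (qfactor 1)%:Fr.
Proof. by rewrite -qint_qfactor tofracM mulfK // tofrac_eq0 qfactor_neq0. Qed.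

Lemma qbinom_qpoch m j : (j <= m)%N ->
  qbinom m j = (qpoch m)%:Fr / ((qpoch j)%:Fr * (qpoch (m - j))%:Fr).
Proof.
move=> le_jm; rewrite /qbinom le_jm -!qfact_qpoch !tofracM !tofracXn.
have cancel_pow (F : fieldType) (a b c x : F) i l : x != 0 ->
    a / (b * c) = a * x ^+ (i + l) / (b * x ^+ i * (c * x ^+ l)).
  by move=> x0; rewrite mulrACA -exprD -mulf_div divff ?mulr1 ?expf_neq0.
rewrite -[in X in _ ^+ X](subnKC le_jm); apply: cancel_pow.
by rewrite tofrac_eq0 qfactor_neq0.
Qed.

Lemma wpoch0 w : wpoch w 0 = 1.
Proof. exact: big_ord0. Qed.

Lemma wpoch1 w : wpoch w 1 = 1 - w.
Proof. by rewrite /wpoch big_ord1 expr1. Qed.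

Definition fq_num (n k : nat) : {poly algC} :=
  qfactor 1 * qpoch n * qpoch (3 * n - 2 * k - 1).
Definition fq_den (n k : nat) : {poly algC} :=
  qfactor (2 * n - k) * qpoch (k - 1) * qpoch (n - k + 1) * qpoch (n - k) *
  qpoch (2 * n - k - 1).

Lemma fq_den_neq0 n k : (k < 2 * n)%N -> fq_den n k != 0.
Proof. by move=> lt_k2n; rewrite !mulf_neq0 ?qpoch_neq0 ?qfactor_neq0 ?subn_gt0. Qed.

Lemma fqE n k : (1 <= k <= n)%N -> fq n k = (fq_num n k)%:Fr / (fq_den n k)%:Fr.
Proof.
case/andP=> k_gt0 le_kn.
rewrite /fq tofrac_qint !qbinom_qpoch; try lia.
have -> : (n - (k - 1) = n - k + 1)%N by lia.
have -> : (3 * n - 2 * k - 1 - (n - k) = 2 * n - k - 1)%N by lia.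
have regroup (F : fieldType) (a b p1 p2 p3 p4 p5 p6 : F) :
    a != 0 -> b != 0 -> p3 != 0 -> p4 != 0 -> p5 != 0 -> p6 != 0 ->
    (b / a)^-1 * (p1 / (p3 * p4)) * (p2 / (p5 * p6)) =
    (a * p1 * p2) / (b * p3 * p4 * p5 * p6).
  by move=> a0 b0 p30 p40 p50 p60; field; rewrite a0 b0 p30 p40 p50 p60.
rewrite /fq_num /fq_den !tofracM; apply: regroup;
  by rewrite tofrac_eq0 ?qpoch_neq0 ?qfactor_neq0 //; lia.
Qed.

Lemma natr_fact_neq0 (R : numFieldType) m : m`!%:R != 0 :> R.
Proof. by rewrite pnatr_eq0 -lt0n fact_gt0. Qed.

Lemma natr_bin (R : numFieldType) m j : (j <= m)%N ->
  'C(m, j)%:R = m`!%:R / (j`!%:R * (m - j)`!%:R) :> R.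
Proof.
move=> le_jm; rewrite -(bin_fact le_jm) !natrM mulfK //.
by rewrite mulf_neq0 ?natr_fact_neq0.
Qed.

Lemma fN_factE N K : (1 <= K <= N)%N ->
  fN N K = N`!%:R * (3 * N - 2 * K - 1)`!%:R /
    ((2 * N - K)%N%:R * (K - 1)`!%:R * (N - K + 1)`!%:R * (N - K)`!%:R *
     (2 * N - K - 1)`!%:R).
Proof.
case/andP=> K_gt0 le_KN; rewrite /fN !natr_bin; try lia.
rewrite (_ : N - (K - 1) = N - K + 1)%N; last lia.
rewrite (_ : 3 * N - 2 * K - 1 - (N - K) = 2 * N - K - 1)%N; last lia.
have K2N : (2 * N - K)%N%:R != 0 :> algC by rewrite pnatr_eq0; lia.
by field; rewrite K2N !natr_fact_neq0.
Qed.

Section PrimitiveRootOrder.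
Variables (d : nat) (w : algC).
Hypothesis w_prim : d.-primitive_root w.

(* The constant (w;w)_(d-1) makes a full block of d factors of (q;q)_m contribute
   exactly its block index to the reduced value, see has_order_qpoch. *)
Definition cyclo_factor : {poly algC} := (wpoch w d.-1)%:P * qfactor d.

Definition has_order (p : {poly algC}) (e : nat) (v : algC) :=
  exists2 B : {poly algC}, p = cyclo_factor ^+ e * B & B.[w] = v.

Lemma has_order0 p : has_order p 0 p.[w].
Proof. by exists p; rewrite ?expr0 ?mul1r. Qed.

Lemma has_orderM p q e1 e2 v1 v2 :
  has_order p e1 v1 -> has_order q e2 v2 -> has_order (p * q) (e1 + e2) (v1 * v2).
Proof.
move=> [B1 -> <-] [B2 -> <-]; exists (B1 * B2); last by rewrite hornerM.
by rewrite exprD; ring.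
Qed.

Lemma has_order_lt p e e' v : (e' < e)%N -> has_order p e v -> has_order p e' 0.
Proof.
move=> lt_e'e [B -> _]; exists (cyclo_factor ^+ (e - e') * B).
  by rewrite mulrA -exprD subnKC // ltnW.
rewrite hornerM horner_exp /cyclo_factor !hornerE (prim_expr_order w_prim).
by rewrite subrr mulr0 expr0n subn_eq0 leqNgt lt_e'e mul0r.
Qed.

Lemma prim_expr_addl q r : w ^+ (d * q + r) = w ^+ r.
Proof. by rewrite exprD exprM (prim_expr_order w_prim) expr1n mul1r. Qed.

Lemma subr_prim_expr_neq0 r : (0 < r < d)%N -> 1 - w ^+ r != 0.
Proof.
case/andP=> r_gt0 lt_rd.
by rewrite subr_eq0 eq_sym -(prim_order_dvd w_prim) gtnNdvd.
Qed.

Lemma wpoch_neq0 r : (r < d)%N -> wpoch w r != 0.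
Proof.
move=> lt_rd; apply/prodf_neq0 => i _.
by rewrite subr_prim_expr_neq0 // (leq_ltn_trans _ lt_rd).
Qed.

Lemma has_order_qfactor m q r : m = (d * q + r)%N ->
  has_order (qfactor m) 0 (1 - w ^+ r).
Proof.
move=> ->; have := has_order0 (qfactor (d * q + r)).
by rewrite /qfactor !hornerE prim_expr_addl.
Qed.

(* 1 - X^(dj) = (1 - X^d) (1 + X^d + ... + X^(d(j-1))), and the second factor is j at w. *)
Lemma has_order_qfactor_dvd m j : m = (d * j)%N ->
  has_order (qfactor m) 1 (j%:R / wpoch w d.-1).
Proof.
move=> ->; have d_gt0 := prim_order_gt0 w_prim.
have c0 : wpoch w d.-1 != 0 by rewrite wpoch_neq0 // prednK.
exists ((wpoch w d.-1)^-1%:P * \sum_(t < j) ('X^d) ^+ t).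
  rewrite expr1 /cyclo_factor mulrACA -polyCM divff // mul1r.
  by rewrite /qfactor exprM -opprB subrX1 -mulNr opprB.
rewrite hornerM hornerC horner_sum mulrC.
rewrite (eq_bigr (fun _ => 1)) ?sumr_const ?card_ord //.
by move=> t _; rewrite -exprM hornerXn exprM (prim_expr_order w_prim) expr1n.
Qed.

Lemma has_order_qpochD q r v :
  has_order (qpoch (d * q)) q v -> has_order (qpoch (d * q + r)) q (v * wpoch w r).
Proof.
move=> /has_orderM /(_ (has_order0 (\prod_(i < r) qfactor (d * q + i).+1))).
rewrite addn0 -qpochD horner_prod; congr (has_order _ _ (_ * _)).
by apply: eq_bigr => i _; rewrite /qfactor !hornerE -addnS prim_expr_addl.
Qed.

Lemma has_order_qpoch m q r : m = (d * q + r)%N ->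
  has_order (qpoch m) q (q`!%:R * wpoch w r).
Proof.
move=> ->; apply: has_order_qpochD; elim: q => [|q IHq].
  by rewrite muln0 /qpoch big_ord0; have := has_order0 1; rewrite hornerC.
have d_gt0 := prim_order_gt0 w_prim.
have c0 : wpoch w d.-1 != 0 by rewrite wpoch_neq0 // prednK.
have def_m : (d * q.+1 = (d * q + d.-1).+1)%N by rewrite mulnS; lia.
rewrite {1}def_m /qpoch big_ord_recr /= -/(qpoch _).
have -> : (q.+1)`!%:R = q`!%:R * wpoch w d.-1 * (q.+1%:R / wpoch w d.-1) :> algC.
  by rewrite -mulrA [_ * (_ / _)]mulrC divfK // factS natrM mulrC.
have := has_orderM (has_order_qpochD d.-1 IHq) (has_order_qfactor_dvd (esym def_m)).
by rewrite addn1.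
Qed.

Lemma value_at_has_order P Q e vP vQ : Q != 0 -> vQ != 0 ->
  has_order P e vP -> has_order Q e vQ -> value_at (P%:Fr / Q%:Fr) w (vP / vQ).
Proof.
move=> Q0 vQ0 [BP -> <-] [BQ defQ vQE]; rewrite defQ in Q0 *.
move: Q0; rewrite mulf_eq0 negb_or => /andP[Ce0 BQ0].
exists BP, BQ; rewrite vQE; split => //; split => //.
have cancel_l (F : fieldType) (c a b : F) : c != 0 -> c * a / (c * b) = a / b.
  by move=> c0; rewrite -mulf_div divff ?mul1r.
by rewrite !tofracM cancel_l // tofrac_eq0.
Qed.

Lemma has_order_fq_num n k e1 e2 e3 v1 v2 v3 :
  has_order (qfactor 1) e1 v1 -> has_order (qpoch n) e2 v2 ->
  has_order (qpoch (3 * n - 2 * k - 1)) e3 v3 ->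
  has_order (fq_num n k) (e1 + e2 + e3) (v1 * v2 * v3).
Proof. by move=> h1 h2 h3; apply: has_orderM => //; apply: has_orderM. Qed.

Lemma has_order_fq_den n k e1 e2 e3 e4 e5 v1 v2 v3 v4 v5 :
  has_order (qfactor (2 * n - k)) e1 v1 -> has_order (qpoch (k - 1)) e2 v2 ->
  has_order (qpoch (n - k + 1)) e3 v3 -> has_order (qpoch (n - k)) e4 v4 ->
  has_order (qpoch (2 * n - k - 1)) e5 v5 ->
  has_order (fq_den n k) (e1 + e2 + e3 + e4 + e5) (v1 * v2 * v3 * v4 * v5).
Proof.
by move=> h1 h2 h3 h4 h5; do 3!apply: has_orderM => //; apply: has_orderM.
Qed.

Lemma value_at_fq n k eN eD vN vD v : (1 <= k <= n)%N ->
  has_order (fq_num n k) eN vN -> has_order (fq_den n k) eD vD -> vD != 0 ->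
  eD = eN -> v = vN / vD -> value_at (fq n k) w v.
Proof.
move=> le1kn hN hD vD0 eDN ->; rewrite eDN in hD; rewrite fqE //.
by apply: value_at_has_order hN hD => //; apply: fq_den_neq0; lia.
Qed.

Lemma value_at_fq_eq0 n k eN eD vN vD : (1 <= k <= n)%N ->
  has_order (fq_num n k) eN vN -> has_order (fq_den n k) eD vD -> vD != 0 ->
  (eD < eN)%N -> value_at (fq n k) w 0.
Proof.
move=> le1kn hN hD vD0 lt_eD_eN.
by apply: value_at_fq (has_order_lt lt_eD_eN hN) hD _ _ _; rewrite ?mul0r.
Qed.

Lemma has_order_fq_den_ndvd n' k' s : (0 < s < d)%N -> (k' < n')%N ->
  exists2 vD, has_order (fq_den (n' * d) (k' * d + s))
    (if s == 1%N then 4 * n' - 2 * k' - 2 else 4 * n' - 2 * k' - 3)%N vD & vD != 0.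
Proof.
case/andP=> s_gt0 lt_sd lt_k'n'; have d_gt0 : (0 < d)%N by lia.
have [-> | s_neq1] /= := eqVneq s 1%N; eexists.
- rewrite (_ : 4 * n' - 2 * k' - 2 =
      0 + k' + (n' - k') + (n' - k' - 1) + (2 * n' - k' - 1))%N; last lia.
  apply: has_order_fq_den.
  + by apply: (has_order_qfactor (q := 2 * n' - k' - 1) (r := d - 1)); nia.
  + by apply: (has_order_qpoch (q := k') (r := 0)); nia.
  + by apply: (has_order_qpoch (q := n' - k') (r := 0)); nia.
  + by apply: (has_order_qpoch (q := n' - k' - 1) (r := d - 1)); nia.
  + by apply: (has_order_qpoch (q := 2 * n' - k' - 1) (r := d - 2)); nia.
- by rewrite !mulf_neq0 ?natr_fact_neq0 ?subr_prim_expr_neq0 ?wpoch_neq0 //; lia.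
- rewrite (_ : 4 * n' - 2 * k' - 3 =
      0 + k' + (n' - k' - 1) + (n' - k' - 1) + (2 * n' - k' - 1))%N; last lia.
  apply: has_order_fq_den.
  + by apply: (has_order_qfactor (q := 2 * n' - k' - 1) (r := d - s)); nia.
  + by apply: (has_order_qpoch (q := k') (r := s - 1)); nia.
  + by apply: (has_order_qpoch (q := n' - k' - 1) (r := d - s + 1)); nia.
  + by apply: (has_order_qpoch (q := n' - k' - 1) (r := d - s)); nia.
  + by apply: (has_order_qpoch (q := 2 * n' - k' - 1) (r := d - s - 1)); nia.
- by rewrite !mulf_neq0 ?natr_fact_neq0 ?subr_prim_expr_neq0 ?wpoch_neq0 //; lia.
Qed.

Lemma has_order_fq_num_ndvd n' k' s : (0 < s < d)%N -> (k' < n')%N ->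
  exists vN, has_order (fq_num (n' * d) (k' * d + s))
    (if 2 * s < d then 4 * n' - 2 * k' - 1 else 4 * n' - 2 * k' - 2)%N vN.
Proof.
case/andP=> s_gt0 lt_sd lt_k'n'; case: ltnP => [lt_2s_d | le_d_2s]; eexists.
- rewrite (_ : 4 * n' - 2 * k' - 1 = 0 + n' + (3 * n' - 2 * k' - 1))%N; last lia.
  apply: has_order_fq_num.
  + by apply: (has_order_qfactor (q := 0) (r := 1)); nia.
  + by apply: (has_order_qpoch (q := n') (r := 0)); nia.
  + by apply: (has_order_qpoch (q := 3 * n' - 2 * k' - 1) (r := d - 2 * s - 1)); nia.
- rewrite (_ : 4 * n' - 2 * k' - 2 = 0 + n' + (3 * n' - 2 * k' - 2))%N; last lia.
  apply: has_order_fq_num.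
  + by apply: (has_order_qfactor (q := 0) (r := 1)); nia.
  + by apply: (has_order_qpoch (q := n') (r := 0)); nia.
  + apply: (has_order_qpoch (q := 3 * n' - 2 * k' - 2) (r := 2 * d - 2 * s - 1)).
    nia.
Qed.

End PrimitiveRootOrder.

Lemma value_at_fq_prim1 n k w : 1.-primitive_root w -> (1 <= k <= n)%N ->
  value_at (fq n k) w (fN n k).
Proof.
move=> w_prim le1kn; have /andP[k_gt0 le_kn] := le1kn.
apply: (value_at_fq w_prim le1kn).
- apply: has_order_fq_num.
  + by apply: (has_order_qfactor_dvd w_prim (j := 1)); lia.
  + by apply: (has_order_qpoch w_prim (q := n) (r := 0)); lia.
  + by apply: (has_order_qpoch w_prim (q := 3 * n - 2 * k - 1) (r := 0)); lia.
- apply: has_order_fq_den.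
  + by apply: (has_order_qfactor_dvd w_prim (j := 2 * n - k)); lia.
  + by apply: (has_order_qpoch w_prim (q := k - 1) (r := 0)); lia.
  + by apply: (has_order_qpoch w_prim (q := n - k + 1) (r := 0)); lia.
  + by apply: (has_order_qpoch w_prim (q := n - k) (r := 0)); lia.
  + by apply: (has_order_qpoch w_prim (q := 2 * n - k - 1) (r := 0)); lia.
- by rewrite wpoch0 invr1 !mulr1 !mulf_neq0 ?natr_fact_neq0 // pnatr_eq0; lia.
- lia.
- by rewrite fN_factE // wpoch0 invr1 !mulr1 mul1r.
Qed.

Lemma value_at_fq_dvd n k d w : d.-primitive_root w -> (2 <= d)%N ->
  (d %| n)%N -> (d %| k)%N -> (1 <= k <= n)%N ->
  value_at (fq n k) w ((n %/ d - k %/ d + 1)%N%:R * fN (n %/ d) (k %/ d)).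
Proof.
move=> w_prim d_ge2 /dvdnP[n' ->] /dvdnP[k' ->] le1kn.
have d_gt0 : (0 < d)%N by lia.
have k'_gt0 : (0 < k')%N by move: le1kn; rewrite muln_gt0 => /andP[/andP[]].
have le_k'n' : (k' <= n')%N by move: le1kn => /andP[_]; rewrite leq_pmul2r.
have [c0 w0] : wpoch w d.-1 != 0 /\ wpoch w 1 != 0.
  by rewrite !(wpoch_neq0 w_prim) //; lia.
rewrite !mulnK //; apply: (value_at_fq w_prim le1kn).
- apply: has_order_fq_num.
  + by apply: (has_order_qfactor w_prim (q := 0) (r := 1)); lia.
  + by apply: (has_order_qpoch w_prim (q := n') (r := 0)); nia.
  + by apply: (has_order_qpoch w_prim (q := 3 * n' - 2 * k' - 1) (r := d.-1)); nia.
- apply: has_order_fq_den.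
  + by apply: (has_order_qfactor_dvd w_prim (j := 2 * n' - k')); nia.
  + by apply: (has_order_qpoch w_prim (q := k' - 1) (r := d.-1)); nia.
  + by apply: (has_order_qpoch w_prim (q := n' - k') (r := 1)); nia.
  + by apply: (has_order_qpoch w_prim (q := n' - k') (r := 0)); nia.
  + by apply: (has_order_qpoch w_prim (q := 2 * n' - k' - 1) (r := d.-1)); nia.
- by rewrite wpoch0 !mulf_neq0 ?natr_fact_neq0 ?invr_eq0 ?oner_neq0 // pnatr_eq0; lia.
- lia.
rewrite fN_factE ?k'_gt0 ?le_k'n' // wpoch0 wpoch1 expr1 addn1 factS natrM.
rewrite wpoch1 in w0.
have s0 : (2 * n' - k')%N%:R != 0 :> algC by rewrite pnatr_eq0; lia.
have s1 : (n' - k').+1%:R != 0 :> algC by rewrite pnatr_eq0.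
by field; rewrite ?natr_fact_neq0 c0 w0 s0 nat1r s1.
Qed.

Lemma value_at_fq_half n k w : 2.-primitive_root w -> (2 %| n)%N -> odd k ->
  (1 <= k <= n)%N ->
  value_at (fq n k) w ('C(n %/ 2, (k + 1) %/ 2 - 1)%:R *
    'C(3 * (n %/ 2) - 2 * ((k + 1) %/ 2), n %/ 2 - (k + 1) %/ 2)%:R).
Proof.
move=> w_prim /dvdnP[n' ->] odd_k le1kn.
have def_k : k = (2 * k./2 + 1)%N.
  by rewrite -{1}(odd_double_half k) odd_k -muln2 /=; lia.
move: le1kn; rewrite def_k; move: k./2 => k0 le1kn {odd_k def_k}.
have lt_k0n' : (k0 < n')%N by lia.
have -> : ((2 * k0 + 1 + 1) %/ 2 = k0 + 1)%N by lia.
have -> : (n' * 2 %/ 2 = n')%N by lia.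
have w0 : wpoch w 1 != 0 by rewrite (wpoch_neq0 w_prim).
apply: (value_at_fq w_prim le1kn).
- apply: has_order_fq_num.
  + by apply: (has_order_qfactor w_prim (q := 0) (r := 1)); lia.
  + by apply: (has_order_qpoch w_prim (q := n') (r := 0)); lia.
  + by apply: (has_order_qpoch w_prim (q := 3 * n' - 2 * k0 - 2) (r := 1)); lia.
- apply: has_order_fq_den.
  + by apply: (has_order_qfactor w_prim (q := 2 * n' - k0 - 1) (r := 1)); lia.
  + by apply: (has_order_qpoch w_prim (q := k0) (r := 0)); lia.
  + by apply: (has_order_qpoch w_prim (q := n' - k0) (r := 0)); lia.
  + by apply: (has_order_qpoch w_prim (q := n' - k0 - 1) (r := 1)); lia.
  + by apply: (has_order_qpoch w_prim (q := 2 * n' - k0 - 1) (r := 0)); lia.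
- by rewrite wpoch0 -wpoch1 !mulf_neq0 ?natr_fact_neq0 ?oner_neq0.
- lia.
rewrite !natr_bin; try lia.
have -> : (k0 + 1 - 1 = k0)%N by lia.
have -> : (3 * n' - 2 * (k0 + 1) = 3 * n' - 2 * k0 - 2)%N by lia.
have -> : (n' - (k0 + 1) = n' - k0 - 1)%N by lia.
have -> : (3 * n' - 2 * k0 - 2 - (n' - k0 - 1) = 2 * n' - k0 - 1)%N by lia.
rewrite wpoch0 wpoch1 expr1 in w0 *.
by field; rewrite ?natr_fact_neq0 w0.
Qed.

Lemma value_at_fq_ndvd n k d w : d.-primitive_root w -> (3 <= d)%N ->
  (d %| n)%N -> ~~ (d %| k)%N -> (1 <= k <= n)%N -> value_at (fq n k) w 0.
Proof.
move=> w_prim d_ge3 /dvdnP[n' ->] ndvd_dk le1kn.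
have d_gt0 : (0 < d)%N by lia.
have s_gt0 : (0 < k %% d)%N by rewrite lt0n.
have lt_sd : (k %% d < d)%N by rewrite ltn_pmod.
rewrite (divn_eq k d) in le1kn *.
move: (k %/ d)%N (k %% d)%N s_gt0 lt_sd le1kn => k' s s_gt0 lt_sd le1kn.
have lt_k'n' : (k' < n')%N by nia.
have s_bounds : (0 < s < d)%N by rewrite s_gt0 lt_sd.
have [vD hD vD0] := has_order_fq_den_ndvd w_prim s_bounds lt_k'n'.
have [vN hN] := has_order_fq_num_ndvd w_prim s_bounds lt_k'n'.
apply: (value_at_fq_eq0 w_prim le1kn hN hD vD0).
by have [s1|_] /= := eqVneq s 1%N; case: (ltnP (2 * s) d) => ? /=; lia.
Qed.

Theorem lemma2p1 (n k d : nat) (w : algC) :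
  (1 <= n)%N -> (1 <= k <= n)%N -> (0 < d)%N -> (d %| n)%N ->
  d.-primitive_root w ->
  [/\ (d = 1%N -> value_at (fq n k) w (fN n k)),
      ((2 <= d)%N -> (d %| k)%N ->
        value_at (fq n k) w (((n %/ d - k %/ d + 1)%N)%:R * fN (n %/ d) (k %/ d))),
      (d = 2%N -> odd k ->
        value_at (fq n k) w
          (('C(n %/ 2, (k + 1) %/ 2 - 1))%:R *
           ('C(3 * (n %/ 2) - 2 * ((k + 1) %/ 2), n %/ 2 - (k + 1) %/ 2))%:R))
    & (d <> 1%N -> ~ ((2 <= d)%N /\ (d %| k)%N) -> ~ (d = 2%N /\ odd k) ->
        value_at (fq n k) w 0)].
Proof.
move=> _ le1kn d_gt0 dvd_dn w_prim; split.
- by move=> d1; subst d; apply: value_at_fq_prim1.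
- by move=> d_ge2 dvd_dk; apply: value_at_fq_dvd.
- by move=> d2 odd_k; subst d; apply: value_at_fq_half.
move=> d_neq1 not_dvd not_half.
have ndvd_dk : ~~ (d %| k)%N by apply/negP => dvd_dk; apply: not_dvd; split => //; lia.
apply: (value_at_fq_ndvd w_prim _ dvd_dn ndvd_dk le1kn).
case: (ltnP 2 d) => // le_d2; have d2 : d = 2%N by lia.
by case: not_half; split => //; move: ndvd_dk; rewrite d2 dvdn2 negbK.
Qed.
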